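(* Let $d>1$ and $1\le d_1\le d$ be integers, let $C>0$, and let $B>5+\log_2 C$. For an integer $k\ge1$ put $n=2^k$, $s_j=n/2^{j-1}$, and for $1\le i\le k$ put $$j_0=j_0(i)=\tfrac1d\log n+\big(1-\tfrac{d_1}{d}\big)(i-1)-\big(1+\tfrac1d\big)\log\log n-B,$$ and for a constant $A>0$ and $i-1\le j\le k$ put $$\Delta_j^i=A\,\frac{1}{(1+|j-j_0|)^2}\cdot\frac{n^{1/2-1/(2d)}}{2^{(1/2-d_1/(2d))(i-1)}}\cdot\log^{1/2+1/(2d)}n .$$ Then there is $A_0>0$ depending only on $d$, $C$ and $B$ such that for every $A\ge A_0$ and every $k\ge1$, $$\sum_{i=1}^{k}\sum_{j=i-1}^{k}C\cdot\frac{j^d\,2^{jd}}{2^{(d-d_1)(i-1)}}\exp\!\Big(-\frac{(\Delta_j^i)^2}{16\,s_j}\Big)\le\frac{n}{16}.$$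
   Context: $\log$ denotes the base-2 logarithm and $\exp$ the natural exponential. *)

From Stdlib Require Import Reals List.
Open Scope R_scope.

Definition log2 (x : R) : R := ln x / ln 2.

(** sumR a b f = f a + f (a+1) + ... + f b  (empty if b < a) *)
Definition sumR (a b : nat) (f : nat -> R) : R :=
  fold_right (fun i acc => f i + acc) 0 (List.seq a (S b - a)).

Definition nn (k : nat) : R := 2 ^ k.

Definition s_ (k j : nat) : R := nn k / Rpower 2 (INR j - 1).

Definition j0 (d d1 : nat) (B : R) (k i : nat) : R :=
  / INR d * log2 (nn k) + (1 - INR d1 / INR d) * (INR i - 1)
  - (1 + / INR d) * log2 (log2 (nn k)) - B.

Definition Delta (d d1 : nat) (A B : R) (k i j : nat) : R :=
  A * (1 / (1 + Rabs (INR j - j0 d d1 B k i)) ^ 2)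
    * (Rpower (nn k) (1/2 - 1 / (2 * INR d))
       / Rpower 2 ((1/2 - INR d1 / (2 * INR d)) * (INR i - 1)))
    * Rpower (log2 (nn k)) (1/2 + 1 / (2 * INR d)).

Definition term (d d1 : nat) (C A B : R) (k i j : nat) : R :=
  C * (INR j ^ d * 2 ^ (j * d) / 2 ^ ((d - d1) * (i - 1)))
    * exp (- (Delta d d1 A B k i j ^ 2 / (16 * s_ k j))).

From Pilot Require Import Defs.
From Stdlib Require Import Reals List Lra Lia.
Open Scope R_scope.

(* Writing t = j - j0(i), the (i, j) summand equals
   C 2^(-dB) (n/k) (j/k)^d * 2^(dt) exp(-a 2^t / (1+|t|)^4)  with  a = A^2 / 2^(B+5).
   Once a is large, 2^(dt) exp(-a 2^t / (1+|t|)^4) <= eps (sigma(t+1) - sigma(t)) for the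
   logistic function sigma(x) = 2^x / (1 + 2^x): the increment is about 2^t for t <= 0, where
   2^(dt) <= 2^(2t), and about 2^(-t) for t >= 0, where the damping factor wins.  So each
   inner sum over j telescopes to at most eps C 2^(-dB) n/k, and eps = 2^(dB) / (16 C) makes
   the k outer terms add up to n/16. *)

Lemma sumR_le a b f g :
  (forall i, (a <= i <= b)%nat -> f i <= g i) -> sumR a b f <= sumR a b g.
Proof.
  unfold sumR; intros Hfg.
  assert (Hin : forall i, In i (seq a (S b - a)) -> f i <= g i).
  { intros i Hi; apply in_seq in Hi; apply Hfg; lia. }
  induction (seq a (S b - a)) as [|x l IH]; simpl; [lra|].
  assert (f x <= g x) by (apply Hin; left; reflexivity).
  assert (fold_right (fun i acc => f i + acc) 0 l
          <= fold_right (fun i acc => g i + acc) 0 l)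
    by (apply IH; intros; apply Hin; right; assumption).
  lra.
Qed.

Lemma sumR_scal a b c f : sumR a b (fun i => c * f i) = c * sumR a b f.
Proof. unfold sumR; induction (seq a (S b - a)); simpl; [ring | rewrite IHl; ring]. Qed.

Lemma sumR_const a b c : sumR a b (fun _ => c) = INR (S b - a) * c.
Proof.
  unfold sumR; generalize (S b - a)%nat as m; intros m; revert a.
  induction m as [|m IH]; intros a.
  - simpl; ring.
  - simpl fold_right; rewrite IH, S_INR; ring.
Qed.

Lemma sumR_telescope a b (h : nat -> R) :
  (a <= S b)%nat -> sumR a b (fun i => h (S i) - h i) = h (S b) - h a.
Proof.
  intros Hab; unfold sumR.
  replace (h (S b)) with (h (a + (S b - a))%nat) by (f_equal; lia).
  generalize (S b - a)%nat as m; intros m; clear Hab; revert a.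
  induction m as [|m IH]; intros a; simpl.
  - rewrite Nat.add_0_r; ring.
  - rewrite IH, Nat.add_succ_r; simpl; ring.
Qed.

Lemma ln2_pos : 0 < ln 2.
Proof. pose proof ln_lt_2; lra. Qed.

Lemma ln2_le_1 : ln 2 <= 1.
Proof.
  rewrite <- (ln_exp 1); left; apply ln_increasing; [lra |].
  pose proof (exp_ineq1 1 ltac:(lra)); lra.
Qed.

Lemma exp_le_mono x y : x <= y -> exp x <= exp y.
Proof. intros [Hxy | ->]; [left; apply exp_increasing |]; lra. Qed.

Lemma exp_neg_le_inv x : 0 < x -> exp (- x) <= / x.
Proof.
  intros Hx; rewrite exp_Ropp; apply Rinv_le_contravar; [exact Hx |].
  pose proof (exp_ineq1_le x); lra.
Qed.

Lemma Rpower2_pos x : 0 < Rpower 2 x.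
Proof. apply exp_pos. Qed.

Lemma Rpower2_div x y : Rpower 2 x / Rpower 2 y = Rpower 2 (x - y).
Proof. unfold Rminus; rewrite Rpower_plus, Rpower_Ropp; reflexivity. Qed.

Lemma Rpower2_log2 x : 0 < x -> Rpower 2 (log2 x) = x.
Proof.
  intros Hx; unfold Rpower, log2.
  pose proof ln2_pos; replace (ln x / ln 2 * ln 2) with (ln x) by (field; lra).
  apply exp_ln, Hx.
Qed.

Lemma pow5_le_Rpower2 t : 0 <= t -> (ln 2 / 5 * (1 + t)) ^ 5 <= Rpower 2 t.
Proof.
  intros Ht; pose proof ln2_pos; pose proof ln2_le_1.
  replace (Rpower 2 t) with (Rpower 2 (t / 5) ^ 5)
    by (rewrite <- Rpower_pow, Rpower_mult by apply Rpower2_pos; f_equal; simpl; field).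
  apply pow_incr; split; [nra |].
  (* [exp x >= 1 + x] at [x = t ln 2 / 5], and [ln 2 / 5 <= 1] *)
  apply Rle_trans with (1 + t / 5 * ln 2); [nra | apply exp_ineq1_le].
Qed.

Definition logistic2 (x : R) : R := Rpower 2 x / (1 + Rpower 2 x).

Lemma logistic2_bounds x : 0 < logistic2 x < 1.
Proof.
  unfold logistic2; pose proof (Rpower2_pos x).
  split; [apply Rdiv_lt_0_compat; lra |].
  apply Rmult_lt_reg_r with (1 + Rpower 2 x); [lra |].
  unfold Rdiv; rewrite Rmult_assoc, Rinv_l; lra.
Qed.

Lemma logistic2_increment x :
  logistic2 (x + 1) - logistic2 x
  = Rpower 2 x / ((1 + 2 * Rpower 2 x) * (1 + Rpower 2 x)).
Proof.
  unfold logistic2; rewrite Rpower_plus, Rpower_1 by lra.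
  pose proof (Rpower2_pos x); field; lra.
Qed.

Lemma logistic2_increment_ge_nonpos x :
  x <= 0 -> Rpower 2 x / 6 <= logistic2 (x + 1) - logistic2 x.
Proof.
  intros Hx; rewrite logistic2_increment.
  pose proof (Rpower2_pos x).
  assert (Rpower 2 x <= 1) by (rewrite <- (Rpower_O 2) by lra; apply Rle_Rpower; lra).
  apply Rmult_le_compat_l; [lra |].
  apply Rinv_le_contravar; nra.
Qed.

Lemma logistic2_increment_ge_nonneg x :
  0 <= x -> / (6 * Rpower 2 x) <= logistic2 (x + 1) - logistic2 x.
Proof.
  intros Hx; rewrite logistic2_increment.
  pose proof (Rpower2_pos x).
  assert (1 <= Rpower 2 x) by (rewrite <- (Rpower_O 2) by lra; apply Rle_Rpower; lra).
  replace (Rpower 2 x / ((1 + 2 * Rpower 2 x) * (1 + Rpower 2 x)))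
    with (/ ((1 + 2 * Rpower 2 x) * (1 + Rpower 2 x) / Rpower 2 x))
    by (field; nra).
  apply Rinv_le_contravar; [apply Rdiv_lt_0_compat; nra |].
  apply Rmult_le_reg_r with (Rpower 2 x); [lra |].
  unfold Rdiv; rewrite Rmult_assoc, Rinv_l; nra.
Qed.

Definition damping (a t : R) : R := exp (- (a * Rpower 2 t / (1 + Rabs t) ^ 4)).

Lemma damping_pos a t : 0 < damping a t.
Proof. apply exp_pos. Qed.

Lemma damping_le_1 a t : 0 <= a -> damping a t <= 1.
Proof.
  intros Ha; rewrite <- exp_0; apply exp_le_mono.
  pose proof (Rpower2_pos t); pose proof (Rabs_pos t).
  assert (0 < (1 + Rabs t) ^ 4) by (apply pow_lt; lra).
  enough (0 <= a * Rpower 2 t / (1 + Rabs t) ^ 4) by lra.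
  apply Rmult_le_pos; [nra | left; apply Rinv_0_lt_compat; lra].
Qed.

Lemma Rpower2_damping_le a t : 0 < a -> Rpower 2 t * damping a t <= (1 + Rabs t) ^ 4 / a.
Proof.
  intros Ha; pose proof (Rpower2_pos t); pose proof (Rabs_pos t).
  assert (0 < (1 + Rabs t) ^ 4) by (apply pow_lt; lra).
  assert (HX : 0 < a * Rpower 2 t / (1 + Rabs t) ^ 4) by (apply Rdiv_lt_0_compat; nra).
  apply Rle_trans with (Rpower 2 t * / (a * Rpower 2 t / (1 + Rabs t) ^ 4)).
  - apply Rmult_le_compat_l; [lra | apply exp_neg_le_inv, HX].
  - right; field; lra.
Qed.

Lemma Rpower2_damping_small_nonpos eps : 0 < eps ->
  exists a0, 0 < a0 /\ forall a t, a0 <= a -> t <= 0 ->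
    Rpower 2 t * damping a t <= eps.
Proof.
  intros Heps; pose proof ln2_pos.
  set (delta := Rmin eps 1).
  assert (Hdelta : 0 < delta <= eps /\ delta <= 1)
    by (unfold delta; repeat split; [apply Rmin_glb_lt | apply Rmin_l | apply Rmin_r]; lra).
  set (M := - log2 delta).
  assert (HM4 : 0 < (1 + M) ^ 4).
  { apply pow_lt; unfold M, log2.
    assert (ln delta <= 0).
    { rewrite <- ln_1; destruct (Req_dec delta 1) as [-> | ]; [lra |].
      left; apply ln_increasing; lra. }
    enough (0 <= - (ln delta / ln 2)) by lra.
    unfold Rdiv; rewrite Ropp_mult_distr_l; apply Rmult_le_pos; [lra |].
    left; apply Rinv_0_lt_compat; lra. }
  exists ((1 + M) ^ 4 / eps); split; [apply Rdiv_lt_0_compat; lra |].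
  intros a t Ha Ht.
  assert (Ha0 : 0 < a) by (apply Rlt_le_trans with (2 := Ha), Rdiv_lt_0_compat; lra).
  destruct (Rle_lt_dec (Rpower 2 t) delta) as [Hsmall | Hlarge].
  - pose proof (damping_le_1 a t ltac:(lra)); pose proof (damping_pos a t).
    pose proof (Rpower2_pos t); nra.
  - (* [2^t > delta] confines [t] to [[-M, 0]] *)
    assert (HtM : - t <= M).
    { assert (Hln : ln delta < ln (Rpower 2 t)) by (apply ln_increasing; lra).
      rewrite ln_Rpower in Hln.
      unfold M, log2; apply Rmult_le_reg_r with (ln 2); [lra |].
      unfold Rdiv; rewrite Ropp_mult_distr_l, Rmult_assoc, Rinv_l; lra. }
    assert (Hpow : (1 + Rabs t) ^ 4 <= (1 + M) ^ 4)
      by (apply pow_incr; rewrite Rabs_left1 by lra; lra).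
    apply Rle_trans with ((1 + Rabs t) ^ 4 / a); [apply Rpower2_damping_le, Ha0 |].
    apply Rle_trans with ((1 + M) ^ 4 / a).
    + apply Rmult_le_compat_r; [left; apply Rinv_0_lt_compat |]; lra.
    + apply Rmult_le_reg_r with (a / eps); [apply Rdiv_lt_0_compat; lra |].
      replace ((1 + M) ^ 4 / a * (a / eps)) with ((1 + M) ^ 4 / eps) by (field; lra).
      replace (eps * (a / eps)) with a by (field; lra); exact Ha.
Qed.

Lemma Rpower2_damping_small_nonneg p eps : 0 <= p -> 0 < eps ->
  exists a0, 0 < a0 /\ forall a t, a0 <= a -> 0 <= t ->
    Rpower 2 (p * t) * damping a t <= eps.
Proof.
  intros Hp Heps; pose proof ln2_pos.
  set (kappa := (ln 2 / 5) ^ 5).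
  assert (Hkappa : 0 < kappa) by (apply pow_lt; lra).
  set (L := p * ln 2 + Rabs (ln eps)).
  assert (HL : 0 <= L) by (pose proof (Rabs_pos (ln eps)); unfold L; nra).
  exists ((L + 1) / kappa); split; [apply Rdiv_lt_0_compat; lra |].
  intros a t Ha Ht.
  assert (HaL : L <= a * kappa).
  { apply Rmult_le_compat_r with (r := kappa) in Ha; [| lra].
    unfold Rdiv in Ha; rewrite Rmult_assoc, Rinv_l in Ha; lra. }
  assert (Ha0 : 0 <= a) by (apply Rmult_le_reg_r with kappa; lra).
  (* [2^t >= kappa (1 + t)^5] turns the damping exponent into [a kappa (1 + t)] *)
  assert (Hexponent : a * kappa * (1 + t) <= a * Rpower 2 t / (1 + Rabs t) ^ 4).
  { rewrite Rabs_right by lra.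
    assert (0 < (1 + t) ^ 4) by (apply pow_lt; lra).
    apply Rmult_le_reg_r with ((1 + t) ^ 4); [lra |].
    replace (a * Rpower 2 t / (1 + t) ^ 4 * (1 + t) ^ 4) with (a * Rpower 2 t) by (field; lra).
    pose proof (pow5_le_Rpower2 t Ht).
    replace (a * kappa * (1 + t) * (1 + t) ^ 4) with (a * (ln 2 / 5 * (1 + t)) ^ 5)
      by (unfold kappa; ring).
    apply Rmult_le_compat_l; lra. }
  unfold damping, Rpower at 1.
  rewrite <- exp_plus, <- (exp_ln eps) by exact Heps; apply exp_le_mono.
  assert (L * (1 + t) <= a * kappa * (1 + t)) by (apply Rmult_le_compat_r; lra).
  pose proof (Rle_abs (- ln eps)); rewrite Rabs_Ropp in *.
  pose proof (Rabs_pos (ln eps)); unfold L in *; nra.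
Qed.

Lemma Rpower2_damping_le_logistic2_increment p eps : 2 <= p -> 0 < eps ->
  exists a0, 0 < a0 /\ forall a t, a0 <= a ->
    Rpower 2 (p * t) * damping a t <= eps * (logistic2 (t + 1) - logistic2 t).
Proof.
  intros Hp Heps.
  destruct (Rpower2_damping_small_nonpos (eps / 6)) as [a1 [Ha1 Hnonpos]]; [lra |].
  destruct (Rpower2_damping_small_nonneg (p + 1) (eps / 6)) as [a2 [Ha2 Hnonneg]]; [lra | lra |].
  exists (Rmax a1 a2); split; [apply Rlt_le_trans with a1; [lra | apply Rmax_l] |].
  intros a t Ha.
  pose proof (damping_pos a t); pose proof (Rpower2_pos t).
  destruct (Rle_lt_dec t 0) as [Ht | Ht].
  - assert (Hbound := Hnonpos a t (Rle_trans _ _ _ (Rmax_l a1 a2) Ha) Ht).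
    assert (Rpower 2 (p * t) <= Rpower 2 t * Rpower 2 t)
      by (rewrite <- Rpower_plus; apply Rle_Rpower; nra).
    pose proof (logistic2_increment_ge_nonpos t Ht).
    pose proof (Rpower2_pos (p * t)).
    apply Rle_trans with (Rpower 2 t * (eps / 6)); [nra |].
    apply Rle_trans with (eps * (Rpower 2 t / 6)); [lra |].
    apply Rmult_le_compat_l; lra.
  - assert (Hbound := Hnonneg a t (Rle_trans _ _ _ (Rmax_r a1 a2) Ha) ltac:(lra)).
    replace (Rpower 2 (p * t)) with (Rpower 2 ((p + 1) * t) / Rpower 2 t)
      by (rewrite Rpower2_div; f_equal; ring).
    pose proof (logistic2_increment_ge_nonneg t ltac:(lra)).
    apply Rle_trans with (eps / 6 / Rpower 2 t).
    + unfold Rdiv; rewrite Rmult_comm, <- Rmult_assoc.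
      apply Rmult_le_compat_r; [left; apply Rinv_0_lt_compat |]; lra.
    + apply Rle_trans with (eps * / (6 * Rpower 2 t)).
      * right; field; lra.
      * apply Rmult_le_compat_l; lra.
Qed.

Lemma log2_nn k : log2 (nn k) = INR k.
Proof. unfold log2, nn; rewrite ln_pow by lra; pose proof ln2_pos; field; lra. Qed.

Lemma nn_Rpower2 k : nn k = Rpower 2 (INR k).
Proof. unfold nn; rewrite Rpower_pow by lra; reflexivity. Qed.

Section Summand.

Variables (d d1 : nat) (C A B : R) (k i j : nat).
Hypotheses (Hd : (1 <= d)%nat) (Hd1 : (d1 <= d)%nat) (Hk : (1 <= k)%nat) (Hi : (1 <= i)%nat).

Let offset := INR j - j0 d d1 B k i.

Let k_pos : 0 < INR k.
Proof. apply lt_0_INR; lia. Qed.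

Let d_pos : 0 < INR d.
Proof. apply lt_0_INR; lia. Qed.

Let Rpower_k e : Rpower (INR k) e = Rpower 2 (log2 (INR k) * e).
Proof. rewrite <- Rpower_mult, Rpower2_log2 by exact k_pos; reflexivity. Qed.

Let offset_eq : offset = INR j - INR k / INR d - (1 - INR d1 / INR d) * (INR i - 1)
               + (1 + / INR d) * log2 (INR k) + B.
Proof. unfold offset, j0; rewrite log2_nn; field; lra. Qed.

Lemma Delta_sq_div_s :
  Defs.Delta d d1 A B k i j ^ 2 / (16 * s_ k j)
  = A ^ 2 / Rpower 2 (B + 5) * Rpower 2 offset / (1 + Rabs offset) ^ 4.
Proof.
  unfold Defs.Delta, s_; fold offset; rewrite log2_nn, Rpower_k, nn_Rpower2, Rpower_mult.
  assert (Hpow : (Rpower 2 (INR k * (1 / 2 - 1 / (2 * INR d)))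
                  / Rpower 2 ((1 / 2 - INR d1 / (2 * INR d)) * (INR i - 1))
                  * Rpower 2 (log2 (INR k) * (1 / 2 + 1 / (2 * INR d)))) ^ 2
                 / (Rpower 2 (INR k) / Rpower 2 (INR j - 1))
                 = Rpower 2 offset / Rpower 2 (B + 1)).
  { rewrite !Rpower2_div, <- Rpower_plus, <- (Rpower_pow 2) by apply Rpower2_pos.
    rewrite Rpower_mult, !Rpower2_div.
    f_equal; rewrite offset_eq; simpl INR; field; lra. }
  pose proof (Rabs_pos offset); pose proof (Rpower2_pos (B + 1)).
  replace (B + 5) with (B + 1 + 4) by ring; rewrite Rpower_plus.
  replace (Rpower 2 4) with 16
    by (replace 4 with (INR 4) by (simpl; ring); rewrite Rpower_pow by lra; simpl; ring).
  transitivity (A ^ 2 / 16 / (1 + Rabs offset) ^ 4 * (Rpower 2 offset / Rpower 2 (B + 1))).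
  - rewrite <- Hpow; field.
    repeat split; apply Rgt_not_eq; (apply Rpower2_pos || lra).
  - field; lra.
Qed.

Lemma prefactor_eq :
  INR j ^ d * 2 ^ (j * d) / 2 ^ ((d - d1) * (i - 1))
  = Rpower 2 (- (INR d * B)) * (nn k / INR k) * (INR j / INR k) ^ d
    * Rpower 2 (INR d * offset).
Proof.
  assert (Hpow : 2 ^ (j * d) / 2 ^ ((d - d1) * (i - 1))
                 = Rpower 2 (- (INR d * B)) * (nn k / Rpower (INR k) (INR d + 1))
                   * Rpower 2 (INR d * offset)).
  { rewrite <- !Rpower_pow, Rpower_k, nn_Rpower2, !Rpower2_div, <- !Rpower_plus by lra.
    f_equal; rewrite offset_eq, !mult_INR, !minus_INR by lia; simpl INR; field; lra. }
  rewrite Rpower_plus, Rpower_pow, Rpower_1 in Hpow by lra.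
  unfold Rdiv at 1; rewrite Rmult_assoc; fold (Rdiv (2 ^ (j * d)) (2 ^ ((d - d1) * (i - 1)))).
  rewrite Hpow; unfold Rdiv; rewrite Rpow_mult_distr, pow_inv; field.
  split; apply Rgt_not_eq; [apply pow_lt |]; lra.
Qed.

Lemma term_le : 0 <= C -> (j <= k)%nat ->
  term d d1 C A B k i j
  <= C * Rpower 2 (- (INR d * B)) * (nn k / INR k)
     * (Rpower 2 (INR d * offset) * damping (A ^ 2 / Rpower 2 (B + 5)) offset).
Proof.
  intros HC Hjk.
  unfold term; rewrite Delta_sq_div_s, prefactor_eq; fold (damping (A ^ 2 / Rpower 2 (B + 5)) offset).
  assert (Hratio : (INR j / INR k) ^ d <= 1).
  { rewrite <- (pow1 d); apply pow_incr; split.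
    - apply Rmult_le_pos; [apply pos_INR | left; apply Rinv_0_lt_compat, k_pos].
    - apply Rmult_le_reg_r with (INR k); [exact k_pos |].
      unfold Rdiv; rewrite Rmult_assoc, Rinv_l by lra.
      rewrite Rmult_1_r, Rmult_1_l; apply le_INR, Hjk. }
  assert (0 <= nn k / INR k) by (left; apply Rdiv_lt_0_compat; [unfold nn; apply pow_lt |]; lra).
  pose proof (Rpower2_pos (- (INR d * B))); pose proof (Rpower2_pos (INR d * offset)).
  pose proof (damping_pos (A ^ 2 / Rpower 2 (B + 5)) offset).
  set (X := C * Rpower 2 (- (INR d * B)) * (nn k / INR k)
            * (Rpower 2 (INR d * offset) * damping (A ^ 2 / Rpower 2 (B + 5)) offset)).
  assert (0 <= X)
    by (unfold X; apply Rmult_le_pos; [apply Rmult_le_pos; [apply Rmult_le_pos |] |]; nra).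
  replace (C * (Rpower 2 (- (INR d * B)) * (nn k / INR k) * (INR j / INR k) ^ d
                * Rpower 2 (INR d * offset)) * damping (A ^ 2 / Rpower 2 (B + 5)) offset)
    with (X * (INR j / INR k) ^ d) by (unfold X; ring).
  rewrite <- (Rmult_1_r X) at 2; apply Rmult_le_compat_l; assumption.
Qed.

End Summand.

Lemma sumR_term_le d d1 C A B k i eps :
  (1 <= d)%nat -> (d1 <= d)%nat -> (1 <= i <= k)%nat -> 0 <= C -> 0 <= eps ->
  (forall t, Rpower 2 (INR d * t) * damping (A ^ 2 / Rpower 2 (B + 5)) t
             <= eps * (logistic2 (t + 1) - logistic2 t)) ->
  sumR (i - 1) k (fun j => term d d1 C A B k i j)
  <= C * Rpower 2 (- (INR d * B)) * (nn k / INR k) * eps.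
Proof.
  intros Hd Hd1 Hi HC Heps Hdecay.
  set (c := C * Rpower 2 (- (INR d * B)) * (nn k / INR k)).
  assert (Hc : 0 <= c).
  { assert (0 < nn k / INR k)
      by (apply Rdiv_lt_0_compat; [unfold nn; apply pow_lt; lra | apply lt_0_INR; lia]).
    pose proof (Rpower2_pos (- (INR d * B))).
    unfold c; apply Rmult_le_pos; [apply Rmult_le_pos |]; lra. }
  set (h := fun j : nat => logistic2 (INR j - j0 d d1 B k i)).
  apply Rle_trans with (sumR (i - 1) k (fun j => c * eps * (h (S j) - h j))).
  - apply sumR_le; intros j Hj.
    eapply Rle_trans; [apply term_le; (lia || lra) |]; fold c.
    rewrite Rmult_assoc; apply Rmult_le_compat_l; [exact Hc |].
    unfold h; rewrite S_INR.
    replace (INR j + 1 - j0 d d1 B k i) with (INR j - j0 d d1 B k i + 1) by ring.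
    apply Hdecay.
  - rewrite sumR_scal, sumR_telescope by lia.
    pose proof (logistic2_bounds (INR (S k) - j0 d d1 B k i)).
    pose proof (logistic2_bounds (INR (i - 1) - j0 d d1 B k i)).
    assert (0 <= c * eps) by (apply Rmult_le_pos; assumption).
    unfold h; nra.
Qed.

Theorem mainTheorem7 (d : nat) (C B : R) :
  (1 < d)%nat -> 0 < C -> B > 5 + log2 C ->
  exists A0 : R, 0 < A0 /\
    forall (d1 : nat) (A : R) (k : nat),
      (1 <= d1 <= d)%nat -> A0 <= A -> (1 <= k)%nat ->
      sumR 1 k (fun i => sumR (i - 1) k (fun j => term d d1 C A B k i j))
        <= nn k / 16.
Proof.
  intros Hd HC _.
  set (c0 := C * Rpower 2 (- (INR d * B))).
  assert (Hc0 : 0 < c0) by (unfold c0; pose proof (Rpower2_pos (- (INR d * B))); nra).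
  destruct (Rpower2_damping_le_logistic2_increment (INR d) (/ (16 * c0))) as [a0 [Ha0 Hdecay]].
  { replace 2 with (INR 2) by (simpl; lra); apply le_INR; lia. }
  { apply Rinv_0_lt_compat; lra. }
  pose proof (Rpower2_pos (B + 5)).
  exists (1 + a0 * Rpower 2 (B + 5)); split; [nra |].
  intros d1 A k Hd1 HA Hk.
  assert (Ha : a0 <= A ^ 2 / Rpower 2 (B + 5)).
  { apply Rmult_le_reg_r with (Rpower 2 (B + 5)); [lra |].
    unfold Rdiv; rewrite Rmult_assoc, Rinv_l by lra; nra. }
  assert (Hk' : 0 < INR k) by (apply lt_0_INR; lia).
  apply Rle_trans with (sumR 1 k (fun _ => nn k / (16 * INR k))).
  - apply sumR_le; intros i Hi.
    apply Rle_trans with (c0 * (nn k / INR k) * / (16 * c0)).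
    + apply sumR_term_le; try lia; try lra.
      * left; apply Rinv_0_lt_compat; lra.
      * intros t; apply Hdecay, Ha.
    + right; field; lra.
  - rewrite sumR_const; replace (S k - 1)%nat with k by lia.
    right; field; lra.
Qed.
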